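(* There exists a separable scattered compact Hausdorff space $X$ such that (a) the scattered height of $X$ equals $3$; (b) $X$ is a $\Delta$-space; (c) $X$ is not an Eberlein compact space. (For instance, the one-point compactification of the Isbell–Mrówka space $\Psi(\mathcal A)$ for any uncountable almost disjoint family $\mathcal A$ of subsets of $\mathbb N$.)
   Context: Scattered height: for a scattered space $X$ (every nonempty subset has a relatively isolated point), with $X^{(0)}=X$, $X^{(\alpha+1)}$ the set of non-isolated points of $X^{(\alpha)}$, and intersections at limit stages, $ht(X)$ is the least $\alpha$ with $X^{(\alpha)}=\emptyset$. An Eberlein compact is a compact space homeomorphic to a weakly compact subset of a Banach space (with the weak topology). For an almost disjoint family $\mathcal A$ of infinite subsets of $\mathbb N$, $\Psi(\mathcal A)=\mathbb N\cup\mathcal A$ where points of $\mathbb N$ are isolated and a neighbourhood base at $A\in\mathcal A$ consists of sets $\{A\}\cup B$ with $B\subseteq A$, $A\setminus B$ finite. A topological space $X$ is a $\Delta$-space if for every decreasing sequence $\{D_n:n\in\omega\}$ of subsets of $X$ with $\bigcap_n D_n=\emptyset$ there is a decreasing sequence $\{V_n:n\in\omega\}$ of open subsets of $X$ with $D_n\subseteq V_n$ for all $n$ and $\bigcap_n V_n=\emptyset$. *)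

From HB Require Import structures.
From mathcomp Require Import all_boot all_order all_algebra.
From mathcomp Require Import all_classical all_reals all_analysis.
From mathcomp Require Import Rstruct Rstruct_topology.
Set Implicit Arguments. Unset Strict Implicit. Unset Printing Implicit Defensive.
Import Order.TTheory GRing.Theory Num.Theory.
Import numFieldNormedType.Exports.
Local Open Scope classical_set_scope.
Local Open Scope ring_scope.

Definition isolated_in (X : topologicalType) (A : set X) (x : X) : Prop :=
  A x /\ exists U : set X, open U /\ U `&` A = [set x].

Definition scattered (X : topologicalType) : Prop :=
  forall A : set X, A !=set0 -> exists x, isolated_in A x.

Definition derived (X : topologicalType) (A : set X) : set X :=
  [set x | A x /\ ~ isolated_in A x].

Fixpoint cb_deriv (X : topologicalType) (n : nat) : set X :=
  match n with
  | O => setT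
  | S m => derived (@cb_deriv X m)
  end.

(* ht(X) = n for a finite n: n is the least (ordinal) alpha with X^(alpha) = 0;
   the ordinals below a finite n are exactly 0, ..., n-1. *)
Definition scattered_height_eq (X : topologicalType) (n : nat) : Prop :=
  @cb_deriv X n = set0 /\ (forall m, (m < n)%N -> @cb_deriv X m <> set0).

Definition separable (X : topologicalType) : Prop :=
  exists D : set X, countable D /\ dense D.

Definition Delta_space (X : topologicalType) : Prop :=
  forall D : nat -> set X,
    (forall n, D n.+1 `<=` D n) -> \bigcap_n D n = set0 ->
    exists V : nat -> set X,
      (forall n, open (V n)) /\ (forall n, V n.+1 `<=` V n) /\
      (forall n, D n `<=` V n) /\ \bigcap_n V n = set0.

Definition cont_functional (R : realType) (E : normedModType R) (phi : E -> R)
  : Prop :=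
  (forall (a : R) (x y : E), phi (a *: x + y) = a * phi x + phi y) /\
  continuous phi.

Definition weakly_open (R : realType) (E : normedModType R) (W : set E) : Prop :=
  forall x, W x ->
    exists (n : nat) (phi : 'I_n -> E -> R) (e : R),
      0 < e /\ (forall i, cont_functional (phi i)) /\
      [set y | forall i, `|phi i y - phi i x| < e] `<=` W.

Definition weakly_compact (R : realType) (E : normedModType R) (K : set E) : Prop :=
  forall C : set (set E), (forall W, C W -> weakly_open W) ->
    K `<=` \bigcup_(W in C) W ->
    exists F : set (set E), finite_set F /\ F `<=` C /\ K `<=` \bigcup_(W in F) W.

Definition weak_homeomorphic (R : realType) (X : topologicalType)
  (E : normedModType R) (K : set E) : Prop :=
  exists f : X -> E,
    injective f /\ f @` setT = K /\
    (forall W : set E, weakly_open W -> open (f @^-1` W)) /\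
    (forall U : set X, open U -> exists W : set E, weakly_open W /\ f @` U = K `&` W).

Definition Eberlein_compact (X : topologicalType) : Prop :=
  exists (E : completeNormedModType Rdefinitions.R) (K : set E),
    weakly_compact K /\ weak_homeomorphic X K.

From HB Require Import structures.
From mathcomp Require Import all_boot all_order all_algebra finmap.
From mathcomp Require Import all_classical all_reals all_analysis.
From mathcomp Require Import lra.
Set Implicit Arguments. Unset Strict Implicit. Unset Printing Implicit Defensive.
Import Order.TTheory GRing.Theory Num.Theory.
Import numFieldNormedType.Exports.
Local Open Scope classical_set_scope.
Local Open Scope ring_scope.

(* The witness is the one-point compactification of the Isbell-Mrowka space
   Psi(A) of the uncountable almost disjoint family A of branches of the
   binary tree: the isolated points are the nodes s (finite boolean
   sequences), each branch x : nat -> bool stands for the infinite set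
   {x|k : k} of its initial segments, and Infty is the point at infinity.
   The topology is given directly by its open sets: U is open when every
   branch in U contains a tail of its initial segments and, if Infty is in U,
   the complement of U is "small", i.e. covered by finitely many branches with
   all their nodes plus finitely many further nodes.

   Hausdorffness and the Delta-property use "cells": for each
   point p a neighbourhood cell n p shrinking with n.  Compactness follows from
   the smallness of complements of neighbourhoods of Infty.
   For the failure of the Eberlein property we prove more: the space does not
   embed at all into a normed space with its weak topology.  Under such an
   embedding f, Hahn-Banach (proved here from Zorn's lemma) puts every
   f (Branch x) in the norm closure of the span of the countably many images
   of nodes, while the f (Branch x) are norm-isolated from each other since
   the branches are isolated among the non-nodes; approximating by rational
   combinations then yields an injection of nat -> bool into nat. *)

Lemma no_injection_into_nat (h : (nat -> bool) -> nat) : ~ injective h.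
Proof.
move=> h_inj.
have [g gK] : exists g : nat -> nat -> bool, forall x, g (h x) = x.
  have inv k : exists y : nat -> bool, forall x, h x = k -> y = x.
    have [[x hx]|none] := pselect (exists x, h x = k).
      by exists x => x' hx'; apply: h_inj; rewrite hx hx'.
    by exists (fun=> false) => x hx; case: none; exists x.
  by have [g gP] := choice inv; exists g => x; exact: gP.
pose d k := ~~ g k k.
have := congr1 (fun y => y (h d)) (gK d) => /=.
set k := h d; rewrite /d.
by case: (g k k).
Qed.

Lemma branch_outside (xs : seq (nat -> bool)) : exists y, y \notin xs.
Proof.
apply: contrapT => all_in.
have mem z : z \in xs by apply: contrapT => nz; apply: all_in; exists z; exact/negP.
apply: (@no_injection_into_nat (fun y => index y xs)) => x y e.
by rewrite -(nth_index x (mem x)) e nth_index.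
Qed.

Inductive psi_point := Infty | Node of seq bool | Branch of (nat -> bool).
HB.instance Definition _ := gen_eqMixin psi_point.
HB.instance Definition _ := gen_choiceMixin psi_point.
HB.instance Definition _ := isPointed.Build psi_point Infty.

Definition restr (x : nat -> bool) (k : nat) : seq bool := mkseq x k.

Lemma size_restr x k : size (restr x k) = k. Proof. exact: size_mkseq. Qed.

Lemma restr_agree x y k j : restr x k = restr y k -> (j < k)%N -> x j = y j.
Proof. by move=> /(congr1 (nth false ^~ j)) + jk; rewrite !nth_mkseq. Qed.

(* The small set of the branches xs together with all their nodes and of the
   extra nodes ns: complements of neighbourhoods of Infty must be small. *)
Definition small (xs : seq (nat -> bool)) (ns : seq (seq bool)) (p : psi_point)
  : Prop :=
  match p with
  | Infty => False
  | Node s => s \in ns \/ exists2 x, x \in xs & s = restr x (size s)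
  | Branch x => x \in xs
  end.

Lemma small_sub xs xs' ns ns' :
  {subset xs <= xs'} -> {subset ns <= ns'} -> small xs ns `<=` small xs' ns'.
Proof.
move=> sx sn [|s|x] //=; last exact: sx.
move=> [sns|[x xin e]]; first by left; exact: sn.
by right; exists x => //; exact: sx.
Qed.

Lemma branch_leaves_small xs ns y : y \notin xs ->
  \forall k \near \oo, ~ small xs ns (Node (restr y k)).
Proof.
elim: xs => [_|x xs IH].
  near=> k => /= -[yk|[x]]; last by rewrite in_nil.
  have := @leq_bigmax_seq _ ns xpredT size _ yk isT.
  rewrite size_restr leqNgt => /negP; apply; near: k; exact: nbhs_infty_gt.
rewrite in_cons negb_or => /andP[/eqP yx /IH far].
have /existsNP[j yxj] : ~ forall j, y j = x j by move=> eq; apply/yx/funext.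
near=> k => -[ns_k|[z]]; first by apply: (near far k) => //; left.
rewrite in_cons size_restr => /orP[/eqP-> e|zxs e].
  by apply: yxj; apply: restr_agree e _; near: k; exact: nbhs_infty_gt.
by apply: (near far k) => //=; right; exists z; rewrite ?size_restr.
Unshelve. all: by end_near.
Qed.

Definition psi_open (U : set psi_point) : Prop :=
  (forall x, U (Branch x) -> \forall k \near \oo, U (Node (restr x k))) /\
  (U Infty -> exists xs ns, ~` U `<=` small xs ns).

Lemma psi_openT : psi_open setT.
Proof. by split=> [x _|_]; [exact: nearW | exists [::], [::] => p /(_ I)]. Qed.

Lemma psi_openI : setI_closed psi_open.
Proof.
move=> A B [A_br A_inf] [B_br B_inf]; split.
  by move=> x [/A_br ? /B_br ?]; exact: filterI.
move=> [/A_inf[xs1 [ns1 A_sm]] /B_inf[xs2 [ns2 B_sm]]].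
exists (xs1 ++ xs2), (ns1 ++ ns2) => p /not_andP[/A_sm|/B_sm].
  by apply: small_sub => ?; rewrite mem_cat => ->.
by apply: small_sub => ?; rewrite mem_cat => ->; rewrite orbT.
Qed.

Lemma psi_open_bigcup (I : Type) (f : I -> set psi_point) :
  (forall i, psi_open (f i)) -> psi_open (\bigcup_i f i).
Proof.
move=> fo; split=> [x [i _ /(fo i).1]|[i _ /(fo i).2[xs [ns sm]]]].
  by apply: filterS => k fik; exists i.
by exists xs, ns => p Up; apply: sm => fip; apply: Up; exists i.
Qed.

HB.instance Definition _ :=
  isOpenTopological.Build psi_point psi_openT psi_openI psi_open_bigcup.

Lemma open_Node s : open [set Node s].
Proof. by split=> [x|]. Qed.

Definition branch_nbhd (x : nat -> bool) (m : nat) : set psi_point :=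
  [set p | p = Branch x \/ exists2 k, (m <= k)%N & p = Node (restr x k)].

Lemma open_branch_nbhd x m : open (branch_nbhd x m).
Proof.
split=> [y [[<-]|[k _ //]]|[//|[k _ //]]].
by near=> k; right; exists k => //; near: k; exact: nbhs_infty_ge.
Unshelve. all: by end_near.
Qed.

Lemma open_not_small xs ns : open (~` small xs ns).
Proof.
split=> [y /= y_xs|_]; last by exists xs, ns => p /contrapT.
by apply: (branch_leaves_small ns); apply/negP.
Qed.

Lemma open_Branch_Node U x : open U -> U (Branch x) -> exists k, U (Node (restr x k)).
Proof. by move=> [oB _] /oB /filter_ex. Qed.

Lemma open_Infty_Branch U : open U -> U Infty -> exists x, U (Branch x).
Proof.
move=> [_ oI] /oI[xs [ns sm]]; have [y y_xs] := branch_outside xs.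
by exists y; apply: contrapT => /sm /=; rewrite (negbTE y_xs).
Qed.

Lemma open_meets_Node U : open U -> U !=set0 -> exists s, U (Node s).
Proof.
move=> oU [[|s|x] Up].
- have [x Ux] := open_Infty_Branch oU Up.
  by have [k] := open_Branch_Node oU Ux; exists (restr x k).
- by exists s.
- by have [k] := open_Branch_Node oU Up; exists (restr x k).
Qed.

Lemma psi_separable : separable psi_point.
Proof.
exists (range Node); split.
  exact: card_le_trans (card_image_le _ _) (countableP _).
move=> U /open_meets_Node/[apply] -[s Us].
by exists (Node s); split=> //; exists s.
Qed.

Lemma isolatedP (A : set psi_point) p : isolated_in A p <->
  A p /\ exists2 U, open U & U p /\ forall q, U q -> A q -> q = p.
Proof.
split=> [[Ap [U [oU UA]]]|[Ap [U oU [Up uniq]]]]; split=> //.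
  exists U => //; split; first by have : [set p] p by []; rewrite -UA => -[].
  by move=> q Uq Aq; have : (U `&` A) q by []; rewrite UA.
exists U; split=> //; apply/seteqP; split=> [q [Uq Aq]|_ ->] //.
exact: uniq.
Qed.

Lemma isolated_Node A s : A (Node s) -> isolated_in A (Node s).
Proof.
move=> As; apply/isolatedP; split=> //.
by exists [set Node s]; [exact: open_Node | split=> // q ->].
Qed.

Lemma isolated_Branch A x :
  A (Branch x) -> (forall s, ~ A (Node s)) -> isolated_in A (Branch x).
Proof.
move=> Ax noN; apply/isolatedP; split=> //.
exists (branch_nbhd x 0); first exact: open_branch_nbhd.
split; first by left.
by move=> q [->|[k _ ->]] // /noN.
Qed.

Lemma isolated_Infty A : A `<=` [set Infty] -> A Infty -> isolated_in A Infty.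
Proof.
move=> AI AInf; apply/isolatedP; split=> //.
by exists setT; [exact: openT | split=> // q _ /AI].
Qed.

Lemma not_isolated_Branch A x :
  (forall k, A (Node (restr x k))) -> ~ isolated_in A (Branch x).
Proof.
move=> AN /isolatedP[_ [U oU [Ux uniq]]].
by have [k /uniq /(_ (AN k))] := open_Branch_Node oU Ux.
Qed.

Lemma not_isolated_Infty A : (forall x, A (Branch x)) -> ~ isolated_in A Infty.
Proof.
move=> AB /isolatedP[_ [U oU [Ux uniq]]].
by have [x /uniq /(_ (AB x))] := open_Infty_Branch oU Ux.
Qed.

Lemma psi_scattered : scattered psi_point.
Proof.
move=> A [p Ap].
have [[s As]|noN] := pselect (exists s, A (Node s)).
  by exists (Node s); exact: isolated_Node.
have [[x Ax]|noB] := pselect (exists x, A (Branch x)).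
  by exists (Branch x); apply: isolated_Branch => // s As; apply: noN; exists s.
have AI : A `<=` [set Infty].
  by move=> [|s|x] Aq //; [case: noN; exists s | case: noB; exists x].
have pI : p = Infty := AI p Ap.
by exists Infty; apply: (isolated_Infty AI); rewrite -pI.
Qed.

Definition non_nodes : set psi_point := [set p | forall s, p <> Node s].

Lemma cb_deriv1 : @cb_deriv psi_point 1 = non_nodes.
Proof.
apply/seteqP; split=> [p [_ p_acc] s ps|[|s|x] p_nn].
- by rewrite ps in p_acc; exact/p_acc/isolated_Node.
- by split=> //; exact: not_isolated_Infty.
- by have := p_nn s erefl.
- by split=> //; exact: not_isolated_Branch.
Qed.

Lemma cb_deriv2 : @cb_deriv psi_point 2 = [set Infty].
Proof.
rewrite /= -/(@cb_deriv psi_point 1) cb_deriv1.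
apply/seteqP; split=> [[|s|x] [p_nn p_acc]|_ ->] //.
- by have := p_nn s erefl.
- by case: p_acc; apply: isolated_Branch => // s /(_ s).
- by split=> //; apply: not_isolated_Infty.
Qed.

Lemma cb_deriv3 : @cb_deriv psi_point 3 = set0.
Proof.
rewrite /= -/(@cb_deriv psi_point 2) cb_deriv2.
by apply/seteqP; split=> // _ [-> p_acc]; apply/p_acc/isolated_Infty.
Qed.

Lemma psi_height : scattered_height_eq psi_point 3.
Proof.
split; first exact: cb_deriv3.
have Infty_in m : (m < 3)%N -> @cb_deriv psi_point m Infty.
  by case: m => [|[|[|]]] // _; rewrite ?cb_deriv1 ?cb_deriv2.
by move=> m /Infty_in + cb0; rewrite cb0.
Qed.

Definition cell (n : nat) (p : psi_point) : set psi_point :=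
  match p with
  | Infty => setT
  | Node s => [set Node s]
  | Branch x => branch_nbhd x n.+1
  end.

Lemma open_cell n p : open (cell n p).
Proof.
by case: p => [|s|x]; [exact: openT | exact: open_Node | exact: open_branch_nbhd].
Qed.

Lemma cell_self n p : cell n p p.
Proof. by case: p => //= x; left. Qed.

Lemma cell_decr n p : cell n.+1 p `<=` cell n p.
Proof.
case: p => [|s|x] /= q //; case=> [->|[k lt ->]]; first by left.
by right; exists k => //; exact: ltnW.
Qed.

Lemma cell_trace n p q : cell n p q ->
  [\/ p = Infty, q = p | exists2 s, q = Node s & (n < size s)%N].
Proof.
case: p => [|s|x] /=; [by constructor | by move=> ->; constructor 2 |].
move=> [->|[k lt ->]]; first by constructor 2.
by constructor 3; exists (restr x k); rewrite ?size_restr.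
Qed.

Lemma eventually_outside (T : Type) (D : nat -> set T) :
  (forall n, D n.+1 `<=` D n) -> \bigcap_n D n = set0 ->
  forall q, \forall n \near \oo, ~ D n q.
Proof.
move=> Ddec Dcap q.
have [N DNq] : exists N, ~ D N q.
  apply: contrapT => allD; have : (\bigcap_n D n) q.
    by move=> n _; apply: contrapT => nDn; apply: allD; exists n.
  by rewrite Dcap.
have Dmono := @homo_leq _ D (fun A B => B `<=` A) (fun _ _ => id)
  (fun _ _ _ yx zy => subset_trans zy yx) Ddec.
near=> n => Dn; apply/DNq/(Dmono N n _ q Dn).
by near: n; exact: nbhs_infty_ge.
Unshelve. all: by end_near.
Qed.

(* V n is the union of the n-th cells of the points of D n: a point in all V n
   would eventually be in the cell of a point of D n other than Infty and
   itself, i.e. a node longer than n. *)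
Lemma psi_Delta : Delta_space psi_point.
Proof.
move=> D Ddec Dcap; have out := eventually_outside Ddec Dcap.
exists (fun n => \bigcup_(p in D n) cell n p); split; [|split; [|split]].
- by move=> n; apply: bigcup_open => p _; exact: open_cell.
- by move=> n q [p Dp cq]; exists p; [exact: Ddec | exact: cell_decr].
- by move=> n p Dp; exists p => //; exact: cell_self.
- apply/seteqP; split=> // q Vq; set b := if q is Node s then size s else 0%N.
  have [n [InftyD [qD bn]]] :=
    filter_ex (filterI (out Infty) (filterI (out q) (nbhs_infty_ge b))).
  have [p Dp /cell_trace[pI|qp|[s qs]]] := Vq n I.
  + by apply: InftyD; rewrite -pI.
  + by apply: qD; rewrite qp.
  + by rewrite /b qs in bn; rewrite ltnNge bn.
Qed.

Lemma Node_in_branch_cell n x s :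
  cell n (Branch x) (Node s) -> (n < size s)%N /\ s = restr x (size s).
Proof. by case=> [//|[k lt [->]]]; rewrite size_restr. Qed.

Lemma cells_disjoint p q : p <> Infty -> q <> Infty -> p <> q ->
  exists n, forall r, cell n p r -> cell n q r -> False.
Proof.
move=> + qI; case: p => [|s|x] // _; case: q qI => [|t|y] // _ pq.
- by exists 0%N => r /= -> [ts]; apply: pq; rewrite ts.
- by exists (size s) => r /= -> /(@Node_in_branch_cell _ y s)[]; rewrite ltnn.
- exists (size t) => r + /= rt; rewrite rt.
  by move=> /(@Node_in_branch_cell _ x t)[]; rewrite ltnn.
- have /existsNP[j xyj] : ~ forall j, x j = y j by move=> e; apply/pq/congr1/funext.
  exists j => -[|s|z].
  + by case=> [|[]].
  + move=> /(@Node_in_branch_cell _ x s)[lt ex] /(@Node_in_branch_cell _ y s)[_ ey].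
    by apply/xyj/(restr_agree _ lt); rewrite -ex -ey.
  + by case=> [[->]|[k _ //]] [[xy]|[k _ //]]; apply: pq; rewrite xy.
Qed.

Lemma cell_small p : p <> Infty -> exists xs ns, cell 0 p `<=` small xs ns.
Proof.
case: p => [|s|x] // _; first by exists [::], [:: s] => _ /= ->; left; rewrite mem_head.
exists [:: x], [::] => _ [->|[k _ ->]] /=; first by rewrite mem_head.
by right; exists x; rewrite ?mem_head ?size_restr.
Qed.

Definition separated (p q : psi_point) : Prop :=
  exists U V, [/\ open U, open V, U p, V q & forall r, U r -> V r -> False].

Lemma separated_sym p q : separated p q -> separated q p.
Proof.
by move=> [U [V [oU oV Up Vq UV]]]; exists V, U; split=> // r /[swap]; exact: UV.
Qed.

Lemma separated_Infty p : p <> Infty -> separated Infty p.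
Proof.
move=> pI; have [xs [ns sm]] := cell_small pI.
exists (~` small xs ns), (cell 0 p); split => //.
- exact: open_not_small.
- exact: open_cell.
- exact: cell_self.
- by move=> r nr /sm.
Qed.

Lemma psi_separated p q : p <> q -> separated p q.
Proof.
move=> pq; have [pI|pI] := eqVneq p Infty.
  by rewrite pI in pq *; apply: separated_Infty => qI; apply: pq.
have [qI|qI] := eqVneq q Infty.
  by rewrite qI in pq *; apply/separated_sym/separated_Infty/eqP.
have [n disj] := cells_disjoint (elimN eqP pI) (elimN eqP qI) pq.
exists (cell n p), (cell n q).
by split; [exact: open_cell | exact: open_cell | exact: cell_self | exact: cell_self |].
Qed.

Lemma psi_hausdorff : hausdorff_space psi_point.
Proof.
move=> p q clus; apply: contrapT => /psi_separated[U [V [oU oV Up Vq UV]]].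
have nU : nbhs p U by apply: open_nbhs_nbhs.
have nV : nbhs q V by apply: open_nbhs_nbhs.
by have [r [Ur Vr]] := clus U V nU nV; exact: UV Ur Vr.
Qed.

(* A cover by neighbourhoods g p of the points p has a finite subcover:
   g Infty leaves out a small set, whose nodes are covered by g of their
   branches except for finitely many. *)
Lemma psi_finite_subcover (g : psi_point -> set psi_point) :
  (forall p, open (g p) /\ g p p) ->
  exists L : seq psi_point, forall q, exists2 p, p \in L & g p q.
Proof.
move=> gP; have [[_ oInfty] gInfty] := gP Infty.
have [xs [ns sm]] := oInfty gInfty.
have /choice[m mP] : forall x, exists N,
    forall k, (N <= k)%N -> g (Branch x) (Node (restr x k)).
  by move=> x; have [[oB _] gx] := gP (Branch x); have [N _ NP] := oB x gx; exists N.
set L := Infty :: [seq Branch x | x <- xs] ++ [seq Node s | s <- ns] ++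
  [seq Node (restr x k) | x <- xs, k <- iota 0 (m x)].
have L_Branch x : x \in xs -> Branch x \in L.
  by move=> x_xs; rewrite in_cons mem_cat (map_f (fun x => Branch x) x_xs) orbT.
have L_Node s : s \in ns -> Node s \in L.
  by move=> s_ns; rewrite in_cons !mem_cat (map_f (fun s => Node s) s_ns) !orbT.
have L_restr x k : x \in xs -> (k < m x)%N -> Node (restr x k) \in L.
  move=> x_xs lt; rewrite in_cons !mem_cat orbC.
  by rewrite (allpairs_f_dep (fun x k => Node (restr x k)) x_xs) ?mem_iota ?orbT.
exists L => q; have [gq|/sm] := pselect (g Infty q).
  by exists Infty; rewrite ?mem_head.
case: q => [|s|x] //= => [[s_ns|[x x_xs e]]|x_xs].
- by exists (Node s); [exact: L_Node | exact: (gP _).2].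
- have [lt|ge] := ltnP (size s) (m x).
    by exists (Node s); [rewrite e; exact: L_restr | exact: (gP _).2].
  by exists (Branch x); [exact: L_Branch | rewrite e; exact: mP].
- by exists (Branch x); [exact: L_Branch | exact: (gP _).2].
Qed.

Lemma psi_compact : compact [set: psi_point].
Proof.
rewrite compact_cover => J D f fo cov.
have /choice[i iP] : forall p, exists j, D j /\ f j p.
  by move=> p; have [j Dj fj] := cov p I; exists j.
have [L Lcov] := @psi_finite_subcover (f \o i) (fun p => conj (fo _ (iP p).1) (iP p).2).
exists [fset i p | p in L]%fset.
  by move=> j /imfsetP[p _ ->]; rewrite inE; exact: (iP p).1.
move=> q _; have [p pL fq] := Lcov q; exists (i p) => //=.
by apply/imfsetP; exists p.
Qed.

(* Hahn-Banach for a sublinear functional p on a real vector space.  Partial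
   linear functionals are represented by their graphs. *)
Section HahnBanach.
Context {R : realType} {E : lmodType R}.
Variable p : E -> R.
Hypothesis p_add : forall x y, p (x + y) <= p x + p y.
Hypothesis p_scale : forall (t : R) x, 0 < t -> p (t *: x) = t * p x.

Definition dominated_graph (G : set (E * R)) : Prop :=
  [/\ (forall x a b, G (x, a) -> G (x, b) -> a = b),
      (forall r x y a b, G (x, a) -> G (y, b) -> G (r *: x + y, r * a + b)) &
      (forall x a, G (x, a) -> a <= p x)].

Lemma dominated_graph_scale G x a r :
  dominated_graph G -> G (x, a) -> G (r *: x, r * a).
Proof.
move=> [_ lin _] Gx; have G0 : G (0, 0).
  by have := lin (-1) _ _ _ _ Gx Gx; rewrite scaleN1r addNr mulN1r addNr.
by have := lin r _ _ _ _ Gx G0; rewrite !addr0.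
Qed.

(* The values c at a new vector y for which the extension stays below p. *)
Definition admissible G (y : E) (c : R) : Prop :=
  forall x a, G (x, a) -> a - p (x - y) <= c /\ c <= p (x + y) - a.

(* The classical one-dimensional step: an admissible value exists, namely the
   supremum of the lower bounds a - p (x - y). *)
Lemma extension_constant G y : dominated_graph G -> G (0, 0) ->
  exists c, admissible G y c.
Proof.
move=> [_ lin dom] G00.
pose S := [set v | exists x a, G (x, a) /\ v = a - p (x - y)].
have S_ub x' a' : G (x', a') -> ubound S (p (x' + y) - a').
  move=> Gx' _ [x [a [Gx ->]]]; rewrite lerBlDr addrAC lerBrDl [a' + a]addrC.
  have := dom _ _ (lin 1 _ _ _ _ Gx Gx'); rewrite scale1r mul1r => /le_trans; apply.
  have -> : x + x' = (x - y) + (x' + y) by rewrite addrCA subrK addrC.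
  by rewrite [p (x' + y) + _]addrC; exact: p_add.
have S_sup : has_sup S.
  split; first by exists (0 - p (0 - y)), 0, 0.
  by exists (p (0 + y) - 0); exact: S_ub G00.
exists (sup S) => x a Gx; split; first by apply: sup_upper_bound => //; exists x, a.
by apply: ge_sup; [exact: S_sup.1 | exact: S_ub Gx].
Qed.

Definition extend_graph G (y : E) (c : R) : set (E * R) :=
  [set u | exists x a t, G (x, a) /\ u = (x + t *: y, a + t * c)].

Lemma extend_graph_dominated G y c : dominated_graph G -> admissible G y c ->
  forall x a, extend_graph G y c (x, a) -> a <= p x.
Proof.
move=> gG cP _ _ [u [b [t [Gu [-> ->]]]]]; have [_ _ dom] := gG.
have [t0|t0|<-] := ltrgtP 0 t; last by rewrite scale0r mul0r !addr0; exact: dom.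
- have [_ le] := cP _ _ (dominated_graph_scale t^-1 gG Gu).
  have := ler_wpM2l (ltW t0) le.
  rewrite mulrBr -p_scale // scalerDr scalerA mulfV ?gt_eqF // scale1r.
  by rewrite mulrA mulfV ?gt_eqF // mul1r; lra.
- have nt0 : 0 < - t by rewrite oppr_gt0.
  have [le _] := cP _ _ (dominated_graph_scale (- t)^-1 gG Gu).
  have := ler_wpM2l (ltW nt0) le.
  rewrite mulrBr -p_scale // scalerBr scalerA mulfV ?gt_eqF // scale1r scaleNr opprK.
  by rewrite mulrA mulfV ?gt_eqF // mul1r; lra.
Qed.

Lemma one_step_extension G y : dominated_graph G -> G (0, 0) ->
  ~ (exists a, G (y, a)) -> exists c, dominated_graph (extend_graph G y c).
Proof.
move=> gG G00 y_new; have [c cP] := extension_constant y gG G00.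
have [fun_G lin _] := gG.
exists c; split; last exact: extend_graph_dominated.
- move=> _ _ _ [x [a [t [Gx [-> ->]]]]] [x' [a' [t' [Gx' [e ->]]]]].
  have [tt'|tt'] := eqVneq t t'.
    rewrite -tt' in e *; have ex : x = x' := addIr _ e.
    by rewrite ex in Gx; rewrite (fun_G _ _ _ Gx Gx').
  case: y_new; exists ((t - t')^-1 * (-1 * a + a')).
  have ty : (t - t') *: y = -1 *: x + x'.
    by rewrite scalerBl scaleN1r; apply/eqP; rewrite subr_eq -addrA -e addKr.
  have -> : y = (t - t')^-1 *: (-1 *: x + x').
    by rewrite -ty scalerA mulVf ?scale1r // subr_eq0.
  by apply: dominated_graph_scale => //; exact: lin.
- move=> r _ _ _ _ [u [b [t [Gu [-> ->]]]]] [u' [b' [t' [Gu' [-> ->]]]]].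
  exists (r *: u + u'), (r * b + b'), (r * t + t'); split; first exact: lin.
  congr pair; first by rewrite scalerDr scalerA scalerDl addrACA.
  by rewrite mulrDr mulrA mulrDl addrACA.
Qed.

Lemma extend_graph_sub G y c : G `<=` extend_graph G y c.
Proof. by move=> [x a] Gxa; exists x, a, 0; rewrite scale0r mul0r !addr0. Qed.

Lemma dominated_chain_union (F : set (set (E * R))) :
  (forall H, F H -> dominated_graph H) -> total_on F subset ->
  dominated_graph (\bigcup_(H in F) H).
Proof.
move=> Fdom Ftot.
have common u v : (\bigcup_(H in F) H) u -> (\bigcup_(H in F) H) v ->
    exists2 H, F H & H u /\ H v.
  move=> [H1 F1 u1] [H2 F2 v2]; have [s|s] := Ftot _ _ F1 F2.
    by exists H2 => //; split => //; exact: s.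
  by exists H1 => //; split => //; exact: s.
split.
- move=> x a b ua ub; have [H FH [Ha Hb]] := common _ _ ua ub.
  by have [fun_H _ _] := Fdom H FH; exact: fun_H Ha Hb.
- move=> r x y a b ua ub; have [H FH [Ha Hb]] := common _ _ ua ub.
  by exists H => //; have [_ lin _] := Fdom H FH; exact: lin.
- by move=> x a [H FH Ha]; have [_ _ dom] := Fdom H FH; exact: dom.
Qed.

(* Hahn-Banach: a maximal dominated extension (Zorn's lemma) is total, since
   otherwise the one-step extension would enlarge it.  The empty graph is
   admitted in the Zorn family so that the empty chain has an upper bound. *)
Lemma dominated_extension G : dominated_graph G -> G (0, 0) ->
  exists phi : E -> R, [/\ forall a x y, phi (a *: x + y) = a * phi x + phi y,
    forall x, phi x <= p x & forall x a, G (x, a) -> phi x = a].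
Proof.
move=> gG G00.
pose P H := dominated_graph H /\ (H = set0 \/ G `<=` H).
have [A [[gA A0] Amax]] : exists A, P A /\ forall B, A `<` B -> ~ P B.
  apply: Zorn_bigcup => F FP Ftot; split.
    by apply: dominated_chain_union => // H /FP[].
  have [[H FH GH]|noH] := pselect (exists2 H, F H & G `<=` H).
    by right => u Gu; exists H => //; exact: GH.
  left; apply/seteqP; split => // u [H FH Hu].
  by case: (FP H FH).2 => [H0|GH]; [rewrite H0 in Hu | case: noH; exists H].
have GA : G `<=` A.
  case: A0 => // A0; case: (Amax G); last by split => //; right.
  by rewrite A0; split => // /(_ _ G00).
have total y : exists a, A (y, a).
  apply: contrapT => y_new.
  have [c gc] := one_step_extension gA (GA _ G00) y_new.
  apply: (Amax (extend_graph A y c)); last first.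
    by split => //; right => u /GA; exact: extend_graph_sub.
  split; first exact: extend_graph_sub.
  move=> sub; apply: y_new; exists c; apply: sub.
  by exists 0, 0, 1; rewrite scale1r mul1r !add0r; split => //; exact: GA.
have [phi phiP] := choice total.
have [fun_A lin dom] := gA.
exists phi; split.
- by move=> a x y; apply: fun_A (phiP _) _; exact: lin.
- by move=> x; exact: dom (phiP x).
- by move=> x a /GA Axa; exact: fun_A (phiP x) Axa.
Qed.

End HahnBanach.

Section SeparatingFunctional.
Context {R : realType} {E : normedModType R}.

Lemma bounded_linear_continuous (phi : E -> R) (C : R) : 0 < C ->
  (forall a x y, phi (a *: x + y) = a * phi x + phi y) ->
  (forall x, `|phi x| <= C * `|x|) -> cont_functional phi.
Proof.
move=> C0 lin bnd; split=> // x; apply/cvgrPdist_lt => e e0.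
apply/nbhs_normP; exists (e / C); first by rewrite /= divr_gt0.
move=> t /= xt; have -> : phi x - phi t = phi (-1 *: t + x) by rewrite lin mulN1r addrC.
by apply: le_lt_trans (bnd _) _; rewrite scaleN1r addrC -ltr_pdivlMl // mulrC.
Qed.

(* A vector z at positive distance d from a subspace M is separated from it
   by a continuous functional: Hahn-Banach applied to p := |.| / d and to the
   graph of the functional m + t z |-> t on M + R z. *)
Variables (M : set E) (z : E) (d : R).
Hypothesis d_gt0 : 0 < d.
Hypothesis M0 : M 0.
Hypothesis Mlin : forall a x y, M x -> M y -> M (a *: x + y).
Hypothesis Mdist : forall m, M m -> d <= `|z - m|.

Let p (x : E) : R := d^-1 * `|x|.

Let p_add x y : p (x + y) <= p x + p y.
Proof.
by rewrite /p -mulrDr; apply: ler_wpM2l; [rewrite ltW ?invr_gt0 | exact: ler_normD].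
Qed.

Let p_scale t x : 0 < t -> p (t *: x) = t * p x.
Proof. by move=> t0; rewrite /p normrZ gtr0_norm // mulrCA. Qed.

Let M_scale a m : M m -> M (a *: m).
Proof. by move=> Mm; rewrite -[_ *: _]addr0; exact: Mlin. Qed.

Definition line_graph : set (E * R) :=
  [set u | exists m t, M m /\ u = (m + t *: z, t)].

Lemma line_graph_dominated : dominated_graph p line_graph.
Proof.
split.
- move=> _ a b [m [t [Mm [-> ->]]]] [m' [t' [Mm' [e ->]]]].
  apply: contrapT => /eqP tt'.
  have ty : (t - t') *: z = -1 *: m + m'.
    by rewrite scalerBl scaleN1r; apply/eqP; rewrite subr_eq -addrA -e addKr.
  have := Mdist (M_scale (t - t')^-1 (Mlin (-1) Mm Mm')).
  rewrite -ty scalerA mulVf ?scale1r ?subr_eq0 // subrr normr0.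
  by rewrite leNgt d_gt0.
- move=> r _ _ _ _ [m [t [Mm [-> ->]]]] [m' [t' [Mm' [-> ->]]]].
  exists (r *: m + m'), (r * t + t'); split; first exact: Mlin.
  by congr pair; rewrite scalerDr scalerA scalerDl addrACA.
- move=> _ _ [m [t [Mm [-> ->]]]].
  have [t0|t0] := ltrP 0 t; last first.
    by apply: le_trans t0 _; rewrite /p mulr_ge0 // ltW ?invr_gt0.
  have -> : m + t *: z = t *: (z - (- t^-1) *: m).
    by rewrite scalerBr scalerA mulrN mulfV ?gt_eqF // scaleN1r opprK addrC.
  rewrite p_scale // -[t in t <= _]mulr1 ler_pM2l // /p ler_pdivlMl // mulr1.
  exact/Mdist/M_scale.
Qed.

Lemma separating_functional :
  exists phi, [/\ cont_functional phi, (forall m, M m -> phi m = 0) & phi z = 1].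
Proof.
have G00 : line_graph (0, 0) by exists 0, 0; rewrite scale0r addr0; split.
have [phi [lin phi_p phiG]] :=
  dominated_extension p_add p_scale line_graph_dominated G00.
have phi0 : phi 0 = 0 := phiG _ _ G00.
exists phi; split.
- apply: (@bounded_linear_continuous _ d^-1); rewrite ?invr_gt0 // => x.
  rewrite ler_norml phi_p andbT lerNl.
  have <- : phi (- x) = - phi x.
    by have := lin (-1) x 0; rewrite scaleN1r addr0 phi0 mulN1r addr0.
  by rewrite -(normrN x); exact: phi_p.
- by move=> m Mm; apply: phiG; exists m, 0; rewrite scale0r addr0.
- by apply: phiG; exists 0, 1; rewrite scale1r add0r.
Qed.

End SeparatingFunctional.

Section WeakEmbedding.
Context {R : realType} {E : normedModType R}.

Lemma weakly_open_nbhs (W : set E) z : weakly_open W -> W z -> nbhs z W.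
Proof.
move=> oW Wz; have [n [phi [e [e0 [cf sub]]]]] := oW z Wz.
apply: (@filterS _ (nbhs z) _ _ _ sub); apply: filter_forall => i.
exact: (@cvgr_distC_lt _ _ _ (nbhs z) _ (phi i) (phi i z) ((cf i).2 z) e e0).
Qed.

Lemma weakly_open_halfspace (phi : E -> R) (c : R) :
  cont_functional phi -> weakly_open [set v | c < phi v].
Proof.
move=> cf w /= cw; exists 1%N, (fun=> phi), (phi w - c).
split; first by rewrite subr_gt0.
split=> // v /(_ ord0); rewrite ltr_distlC => /andP[_ lt] /=; lra.
Qed.

(* Linear combinations of images of nodes, with real or rational coefficients;
   the rational ones form a countable set. *)
Definition node_comb (f : psi_point -> E) (l : seq (R * seq bool)) : E :=
  \sum_(q <- l) q.1 *: f (Node q.2).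

Definition rat_node_comb (f : psi_point -> E) (l : seq (rat * seq bool)) : E :=
  node_comb f [seq (ratr q.1, q.2) | q <- l].

Lemma node_comb_lin f a l1 l2 :
  a *: node_comb f l1 + node_comb f l2 =
  node_comb f ([seq (a * q.1, q.2) | q <- l1] ++ l2).
Proof.
rewrite /node_comb big_cat big_map scaler_sumr; congr (_ + _).
by apply: eq_bigr => q _ /=; rewrite scalerA.
Qed.

Lemma rat_node_comb_approx f l (e : R) : 0 < e ->
  exists l', `|node_comb f l - rat_node_comb f l'| < e.
Proof.
elim: l e => [|[r s] l IH] e e0.
  by exists [::]; rewrite /rat_node_comb /node_comb !big_nil subrr normr0.
have e2 : 0 < e / 2 by rewrite divr_gt0.
have [l' Hl'] := IH _ e2.
set a := `|f (Node s)|; have a0 : 0 <= a := normr_ge0 _.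
set dl := e / 2 / (a + 1); have dl0 : 0 < dl by rewrite divr_gt0 //; lra.
have [q] := @rat_in_itvoo R (r - dl) (r + dl) ltac:(lra).
rewrite in_itv /= => /andP[qlo qhi].
exists ((q, s) :: l'); rewrite /rat_node_comb /node_comb /= !big_cons /=.
rewrite -/(node_comb f l) -/(node_comb f _) -/(rat_node_comb f l').
rewrite opprD addrACA -scalerBl; apply: le_lt_trans (ler_normD _ _) _.
rewrite normrZ -/a.
have hq : `|r - ratr q| < dl by rewrite ltr_distlC; apply/andP; split; lra.
have hA : `|r - ratr q| * a <= dl * a by apply: ler_wpM2r => //; exact: ltW.
have hB : dl * a < dl * (a + 1) by rewrite ltr_pM2l //; lra.
have hC : dl * (a + 1) = e / 2 by rewrite /dl divfK // gt_eqF //; lra.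
lra.
Qed.

Variable f : psi_point -> E.
Hypothesis f_cont : forall W, weakly_open W -> open (f @^-1` W).

(* The image of a branch lies in the closed span of the images of nodes:
   otherwise a separating functional phi would give a weakly open half-space
   around f (Branch x) whose preimage contains nodes, on which phi vanishes. *)
Lemma branch_in_closed_span x (e : R) : 0 < e ->
  exists l, `|f (Branch x) - node_comb f l| < e.
Proof.
move=> e0; apply: contrapT => far.
pose M := [set m | exists l, m = node_comb f l].
have [phi [cf phiM phix]] : exists phi, [/\ cont_functional phi,
    (forall m, M m -> phi m = 0) & phi (f (Branch x)) = 1].
  apply: (separating_functional e0).
  - by exists [::]; rewrite /node_comb big_nil.
  - by move=> a _ _ [l1 ->] [l2 ->]; eexists; exact: node_comb_lin.
  - move=> _ [l ->]; rewrite leNgt; apply/negP => close; apply: far; by exists l.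
have [oB _] := f_cont (weakly_open_halfspace (c := 2^-1) cf).
have : (f @^-1` [set v | 2^-1 < phi v]) (Branch x) by rewrite /= phix; lra.
move=> /oB/filter_ex[k]; rewrite /= phiM; first lra.
by exists [:: (1, restr x k)]; rewrite /node_comb big_seq1 scale1r.
Qed.

Hypothesis f_inj : injective f.
Hypothesis f_open : forall U, open U ->
  exists W, weakly_open W /\ f @` U = f @` setT `&` W.

(* The image of a branch has a norm ball free of images of other branches,
   because the branch is isolated among the non-nodes. *)
Lemma branch_image_isolated x :
  exists2 r : R, 0 < r & forall y, `|f (Branch x) - f (Branch y)| < r -> y = x.
Proof.
have [W [oW fW]] := f_open (open_branch_nbhd x 0).
have Wx : W (f (Branch x)).
  suff : (f @` branch_nbhd x 0) (f (Branch x)) by rewrite fW => -[].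
  by exists (Branch x) => //; left.
have /nbhs_normP[r r0 ball_W] := weakly_open_nbhs oW Wx.
exists r => // y /ball_W Wy.
have : (f @` setT `&` W) (f (Branch y)) by split => //; exists (Branch y).
by rewrite -fW => -[q [->|[k _ ->]] /f_inj] // [->].
Qed.

(* Each branch is coded by a precision 1/n with 2/n below its isolation
   radius together with a rational combination 1/n-close to its image. *)
Lemma branch_code x : exists nl : nat * seq (rat * seq bool),
  exists2 r : R, `|f (Branch x) - rat_node_comb f nl.2| < nl.1%:R^-1 &
    (2 * nl.1%:R^-1 < r /\ forall y, `|f (Branch x) - f (Branch y)| < r -> y = x).
Proof.
have [r r0 rP] := branch_image_isolated x.
have [n [rn n0]] := filter_ex (filterI (nbhs_infty_gtr (2 / r)) (nbhs_infty_gt 0)).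
have e0 : 0 < n%:R^-1 / 2 :> R by rewrite divr_gt0 // invr_gt0 ltr0n.
have [l Hl] := branch_in_closed_span x e0.
have [l' Hl'] := rat_node_comb_approx f l e0.
exists (n, l'), r => /=; last split => //.
  by apply: le_lt_trans (ler_distD (node_comb f l) _ _) _; lra.
by move: rn; rewrite !ltr_pdivrMr ?ltr0n // mulrC.
Qed.

Lemma branches_injective_into_nat : exists h : (nat -> bool) -> nat, injective h.
Proof.
have /choice[code codeP] := branch_code.
exists (choice.pickle \o code) => x y /(pcan_inj (@choice.pickleK _)) same.
have [r hx [hr rP]] := codeP x; have [_ hy _] := codeP y.
rewrite same in hx hr; symmetry; apply: rP.
apply: le_lt_trans (ler_distD (rat_node_comb f (code y).2) _ _) _.
by rewrite (distrC (rat_node_comb _ _)); lra.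
Qed.

End WeakEmbedding.

Lemma psi_not_weakly_embeddable {R : realType} (E : normedModType R) (K : set E) :
  ~ weak_homeomorphic psi_point K.
Proof.
move=> [f [f_inj [fK [f_cont f_open]]]]; rewrite -fK in f_open.
have [h h_inj] := branches_injective_into_nat f_cont f_inj f_open.
exact: no_injection_into_nat h_inj.
Qed.

Local Close Scope ring_scope.

Theorem theorem3p10 :
  exists X : topologicalType,
    separable X /\ scattered X /\ compact [set: X] /\ hausdorff_space X /\
    scattered_height_eq X 3 /\ Delta_space X /\ ~ Eberlein_compact X.
Proof.
exists psi_point; split; first exact: psi_separable.
split; first exact: psi_scattered.
split; first exact: psi_compact.
split; first exact: psi_hausdorff.
split; first exact: psi_height.
split; first exact: psi_Delta.
by move=> [E [K [_ emb]]]; exact: psi_not_weakly_embeddable emb.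
Qed.
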